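(* Let $2\le t\le n$. Then for all $s\ge1$, $\mathrm{Ass}(S/I_t(L_n)^s)=\{\mathfrak p_F: F\in C_{n,t}\}$.
   Context: $K$ is a field, $S=K[x_1,\ldots,x_n]$, $I_t(L_n)=(u_1,\ldots,u_{n-t+1})$ with $u_i=x_ix_{i+1}\cdots x_{i+t-1}$, and $\mathfrak p_F=(x_i:i\in F)$. $C_{n,t}$ is the set of subsets $\{i_1<\cdots<i_r\}\subseteq[n]$ with: (1) $1\le i_1\le t$; (2) $i_2>t$; (3) $1\le i_{j+1}-i_j\le t$ for $1\le j\le r-1$; (4) $i_{j+2}-i_j>t$ for $1\le j\le r-2$; (5) $i_{r-1}<n-t+1$; (6) $n-t+1\le i_r\le n$ (conditions referring to nonexistent indices are vacuous). *)

From HB Require Import structures.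
From mathcomp Require Import all_boot all_order all_algebra.
From mathcomp.multinomials Require Import mpoly.

Set Implicit Arguments.
Unset Strict Implicit.
Unset Printing Implicit Defensive.

Import GRing.Theory.
Local Open Scope ring_scope.

Section Defs.
Variables (K : fieldType) (n : nat).
Local Notation S := {mpoly K[n]}.

(** The variable x_j of S = K[x_1,...,x_n] (1-based index j, 1 <= j <= n);
    out-of-range indices give 0 (never used for in-range statements). *)
Definition xvar (j : nat) : S :=
  match @insub nat (fun k => k < n)%N _ j.-1 with
  | Some o => 'X_(o : 'I_n)
  | None => 0
  end.

Definition ideal_gen (G : S -> Prop) : S -> Prop :=
  fun f => exists l : seq (S * S),
    (forall p, p \in l -> G p.2) /\ f = \sum_(p <- l) p.1 * p.2.

Definition ideal_mul (I J : S -> Prop) : S -> Prop :=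
  ideal_gen (fun h => exists a b, I a /\ J b /\ h = a * b).

Definition ideal_pow (I : S -> Prop) (s : nat) : S -> Prop :=
  iter s (ideal_mul I) (fun _ => True).

Definition is_prime_ideal (P : S -> Prop) : Prop :=
  [/\ P 0,
      (forall a b, P a -> P b -> P (a + b)),
      (forall a b, P b -> P (a * b)),
      ~ P 1 &
      (forall a b, P (a * b) -> P a \/ P b)].

Definition is_ass (J P : S -> Prop) : Prop :=
  is_prime_ideal P /\ exists f : S, forall g, P g <-> J (g * f).

Definition path_gen (t i : nat) : S := \prod_(i <= j < i + t) xvar j.

Definition path_ideal (t : nat) : S -> Prop :=
  ideal_gen (fun f => exists i, (1 <= i <= n - t + 1)%N /\ f = path_gen t i).

Definition prime_of (F : seq nat) : S -> Prop :=
  ideal_gen (fun f => exists i, i \in F /\ f = xvar i).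

End Defs.

Definition in_C (n t : nat) (F : seq nat) : Prop :=
  let r := size F in
  let i := fun j => nth 0%N F j.-1 in   (* i j = i_j, 1-based *)
  [/\ sorted ltn F, (forall k, k \in F -> 1 <= k <= n)%N & (1 <= r)%N] /\
  (1 <= i 1 <= t)%N /\
  (2 <= r -> t < i 2)%N /\
  (forall j, 1 <= j <= r - 1 -> 1 <= i j.+1 - i j <= t)%N /\
  (forall j, 1 <= j <= r - 2 -> t < i j.+2 - i j)%N /\
  (2 <= r -> i r.-1 < n - t + 1)%N /\
  (n - t + 1 <= i r <= n)%N.

From HB Require Import structures.
From mathcomp Require Import all_boot all_order all_algebra.
From mathcomp.multinomials Require Import mpoly.
From mathcomp Require Import zify.
From Stdlib Require Import Classical.

Set Implicit Arguments.
Unset Strict Implicit.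
Unset Printing Implicit Defensive.

Import Order.TTheory GRing.Theory.

(* A monomial x^a lies in I^s iff a dominates s windows [i, i + t). A greedy
   packing (always the leftmost window on which a is positive) shows that the
   largest such s is the least total weight of a set of positions meeting every
   window, and the inclusion-minimal such sets are exactly the elements of
   C_{n,t}; hence I^s is the intersection of the p_F^s for F in C_{n,t}. Grading
   by the F-degree shows that p_F^s is p_F-primary. As no two elements of
   C_{n,t} are comparable, each p_F is the colon of I^s by a suitable monomial;
   conversely, an associated prime (I^s : f) contains p_F for some F in C_{n,t}
   with f outside p_F^s, and primarity then forces equality. *)

Lemma ltn_nth_sorted (F : seq nat) k l : sorted ltn F -> k < size F -> l < size F ->
  (nth 0 F k < nth 0 F l) = (k < l).
Proof. by move=> F_sorted; apply: lt_sorted_ltn_nth. Qed.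

Lemma leq_nth_sorted (F : seq nat) k l : sorted ltn F -> k < size F -> l < size F ->
  (nth 0 F k <= nth 0 F l) = (k <= l).
Proof. by move=> F_sorted; apply: lt_sorted_leq_nth. Qed.

(** * Windows, covers and packings *)

Section Windows.
Variables n t : nat.

Definition in_window (i j : nat) : bool := i <= j < i + t.

Definition window_start (i : nat) : bool := 1 <= i <= n - t + 1.

Definition covers (G : pred nat) : Prop :=
  forall i, window_start i -> exists2 j, G j & in_window i j.

Definition weight (G : pred nat) (a : nat -> nat) : nat :=
  \sum_(1 <= j < n.+1) G j * a j.

(* The monomial with exponent vector [a] is divisible by a product of [s]
   generators [u_i]. *)
Definition packs (s : nat) (a : nat -> nat) : Prop :=
  exists2 l : seq nat, size l = s &
    all window_start l /\ forall j, count (in_window^~ j) l <= a j.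

Lemma packs0 a : packs 0 a.
Proof. by exists [::]. Qed.

Lemma packs_window i : window_start i -> packs 1 (in_window i).
Proof. by move=> i_start; exists [:: i]; rewrite //= i_start; split=> // j; rewrite addn0. Qed.

Lemma packs_add s1 s2 a1 a2 : packs s1 a1 -> packs s2 a2 ->
  packs (s1 + s2) (fun j => a1 j + a2 j).
Proof.
move=> [l1 <- [l1_start l1_dom]] [l2 <- [l2_start l2_dom]].
exists (l1 ++ l2); rewrite ?size_cat // all_cat l1_start l2_start; split=> // j.
by rewrite count_cat leq_add.
Qed.

Lemma packs_mono s a b : (forall j, a j <= b j) -> packs s a -> packs s b.
Proof.
move=> le_ab [l l_size [l_start l_dom]]; exists l => //; split=> // j.
exact: leq_trans (l_dom j) (le_ab j).
Qed.

Hypothesis t_le_n : t <= n.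

Lemma window_in_range i j : window_start i -> in_window i j -> 1 <= j <= n.
Proof. by rewrite /window_start /in_window; lia. Qed.

Lemma leq_weight (G H : pred nat) a b : (forall j, 1 <= j <= n -> G j * a j <= H j * b j) ->
  weight G a <= weight H b.
Proof.
move=> le_GH; rewrite /weight big_nat_cond [leqRHS]big_nat_cond.
by apply: leq_sum => j /andP[/andP[j_ge1 j_le] _]; apply: le_GH; lia.
Qed.

Lemma weight_pred1 q a : weight (pred1 q) a <= a q.
Proof.
rewrite /weight (eq_bigr (fun j => if j == q then a j else 0)); last first.
  by move=> j _ /=; case: eqP; rewrite ?mul1n.
rewrite -big_mkcond -big_filter; case: (boolP (q \in index_iota 1 n.+1)) => q_in.
  by rewrite (@filter_pred1_uniq _ _ q) ?iota_uniq // big_seq1.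
rewrite (eq_in_filter (a2 := pred0)) ?filter_pred0 ?big_nil // => j j_in /=.
by apply/negbTE; apply: contraNneq q_in => <-.
Qed.

Lemma packs_weight s a (G : pred nat) : packs s a -> covers G -> s <= weight G a.
Proof.
move=> [l <- [l_start l_dom]] G_covers.
have hit i : i \in l -> 1 <= \sum_(1 <= j < n.+1) G j * in_window i j.
  move=> i_l; have [j Gj ij] := G_covers i (allP l_start i i_l).
  have j_range := window_in_range (allP l_start i i_l) ij.
  rewrite (big_cat_nat (n := j)) ?(@big_ltn _ _ _ j) /= ?Gj ?ij; lia.
rewrite -sum1_size (@leq_trans (\sum_(i <- l) \sum_(1 <= j < n.+1) G j * in_window i j)) //.
  by rewrite big_seq [leqRHS]big_seq; apply: leq_sum.
rewrite exchange_big /weight; apply: leq_sum => j _.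
rewrite -big_distrr leq_mul2l -big_mkcond sum1_count /=.
by rewrite l_dom orbT.
Qed.

Definition exchange (G : pred nat) (i0 q : nat) : pred nat :=
  fun j => (G j && ~~ in_window i0 j) || (j == q) || (j == i0.-1).

(* [q] is the last point of [G] in the window [i0]; moving the points of
   [G] inside that window to [q] and to [i0 - 1] keeps a cover. *)
Lemma covers_exchange (G : pred nat) i0 q : covers G -> G q -> in_window i0 q ->
  (forall j, G j -> in_window i0 j -> j <= q) -> covers (exchange G i0 q).
Proof.
move=> G_covers Gq i0q q_max i i_start; have [z Gz iz] := G_covers i i_start.
have [i0z|i0z] := boolP (in_window i0 z); last by exists z; rewrite // /exchange Gz i0z.
have z_le_q := q_max z Gz i0z.
have [iq|iq] := boolP (in_window i q); first by exists q; rewrite // /exchange eqxx orbT.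
have [ii0|ii0] := boolP (in_window i i0.-1); first by exists i0.-1; rewrite // /exchange eqxx !orbT.
by move: i_start iz i0z i0q iq ii0 z_le_q; rewrite /window_start /in_window; lia.
Qed.

Lemma weight_exchange (G : pred nat) i0 q a :
  (forall j, in_window i0 j -> 0 < a j) -> (1 < i0 -> a i0.-1 = 0) ->
  G q -> in_window i0 q ->
  weight (exchange G i0 q) a <= weight G (fun j => a j - in_window i0 j) + 1.
Proof.
move=> a_pos a_before Gq i0q; have := weight_pred1 q (fun=> 1).
rewrite /weight => le_1; apply: leq_trans (leq_add (leqnn _) le_1).
rewrite -big_split /= big_nat_cond [leqRHS]big_nat_cond.
apply: leq_sum => j /andP[/andP[j_ge1 _] _]; rewrite /exchange.
have [i0j|i0j] := boolP (in_window i0 j).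
  have [->|jq] := eqVneq j q; first by rewrite Gq /=; have := a_pos q i0q; lia.
  have [ji0|_] := eqVneq j i0.-1; first by move: i0j; rewrite ji0 /in_window; lia.
  by rewrite andbF.
have [jq|_] := eqVneq j q; first by move: i0j; rewrite jq i0q.
have [ji0|_] := eqVneq j i0.-1; last by rewrite !orbF andbT /= subn0; lia.
by move: j_ge1; rewrite ji0 orbT => i0_gt1; rewrite a_before ?muln0 //; lia.
Qed.

Lemma weight_outside_window (G : pred nat) i0 a :
  (forall j, G j -> ~~ in_window i0 j) ->
  weight G (fun j => a j - in_window i0 j) = weight G a.
Proof.
move=> G_out; apply: eq_bigr => j _.
by case Gj: (G j) => //=; rewrite (negbTE (G_out j Gj)) subn0.
Qed.

Lemma weight_zeros a : weight (fun j => a j == 0) a = 0.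
Proof. by rewrite /weight big1 // => j _; case: eqP => [->|]; rewrite ?muln0. Qed.

Lemma weight_sub_window s a i0 :
  (forall j, in_window i0 j -> 0 < a j) -> (1 < i0 -> a i0.-1 = 0) ->
  (forall G, covers G -> s < weight G a) ->
  forall G, covers G -> s <= weight G (fun j => a j - in_window i0 j).
Proof.
move=> a_pos a_before a_weight G G_covers.
have [[q [Gq i0q] q_max]|G_out] :=
  classic (exists2 q, G q /\ in_window i0 q & forall j, G j -> in_window i0 j -> j <= q).
  have := a_weight _ (covers_exchange G_covers Gq i0q q_max).
  by have := weight_exchange a_pos a_before Gq i0q; lia.
rewrite weight_outside_window; first exact/ltnW/a_weight.
move=> j Gj; apply/negP => i0j; apply: G_out.
have ex_G : exists q, G q && in_window i0 q by exists j; rewrite Gj.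
have G_bounded q : G q && in_window i0 q -> q <= i0 + t.
  by case/andP => _; rewrite /in_window; lia.
case: (ex_maxnP ex_G G_bounded) => q /andP[Gq i0q] q_max; exists q => // k Gk i0k.
by apply: q_max; rewrite Gk.
Qed.

(* Converse of [packs_weight]: the greedy packing, which repeatedly takes the
   leftmost window on which [a] is positive, is optimal. *)
Lemma packs_of_weight s a : (forall G, covers G -> s <= weight G a) -> packs s a.
Proof.
elim: s a => [|s IHs] a a_weight; first exact: packs0.
pose positive_on i := window_start i && all (fun j => 0 < a j) (iota i t).
have [ex_pos|no_pos] := classic (exists i, positive_on i); last first.
  suff /a_weight : covers (fun j => a j == 0) by rewrite weight_zeros.
  move=> i i_start; have : ~~ positive_on i by apply/negP => pos_i; apply: no_pos; exists i.
  rewrite /positive_on i_start /= -has_predC => /hasP[j]; rewrite mem_iota /= -eqn0Ngt.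
  by exists j; rewrite // /in_window; lia.
case: (ex_minnP ex_pos) => i0 /andP[i0_start /allP pos_i0] i0_min.
have a_pos j : in_window i0 j -> 0 < a j.
  by move=> i0j; apply: pos_i0; rewrite mem_iota; move: i0j; rewrite /in_window; lia.
have a_before : 1 < i0 -> a i0.-1 = 0.
  move=> i0_gt1; have : ~~ positive_on i0.-1 by apply/negP => /i0_min; lia.
  rewrite /positive_on; have -> : window_start i0.-1 by move: i0_start; rewrite /window_start; lia.
  rewrite /= -has_predC => /hasP[j]; rewrite mem_iota /= -eqn0Ngt => j_range /eqP aj0.
  have [->//|j_ne] := eqVneq i0.-1 j.
  suff /a_pos : in_window i0 j by rewrite aj0.
  by move: j_range j_ne; rewrite /in_window; lia.
have [l l_size [l_start l_dom]] := IHs _ (weight_sub_window a_pos a_before a_weight).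
exists (i0 :: l); first by rewrite /= l_size.
split; first by rewrite /= i0_start.
by move=> j /=; have := l_dom j; case: (boolP (in_window i0 j)) => [/a_pos|]; lia.
Qed.

(** * Minimal covers are the elements of [C_{n,t}] *)

Definition has_private_window (G : pred nat) (x : nat) : Prop :=
  exists2 i, window_start i & in_window i x /\ forall y, G y -> in_window i y -> y = x.

Definition minimal_cover (H : pred nat) : Prop :=
  covers H /\ forall x, H x -> ~ covers (fun j => H j && (j != x)).

Lemma minimal_cover_private (H : pred nat) x :
  minimal_cover H -> H x -> has_private_window H x.
Proof.
move=> [H_covers H_min] Hx; apply: NNPP => no_private; apply: (H_min x Hx) => i i_start.
have [z Hz iz] := H_covers i i_start; have [zx|zx] := eqVneq z x; last by exists z; rewrite ?Hz.
apply: NNPP => no_other; apply: no_private; exists i => //.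
split=> [|y Hy iy]; first by rewrite -zx.
by case: (eqVneq y x) => // yx; case: no_other; exists y; rewrite ?Hy.
Qed.

Lemma minimal_cover_exists (G : pred nat) : covers G ->
  exists2 H : pred nat, (forall j, H j -> G j /\ 1 <= j <= n) & minimal_cover H.
Proof.
move=> G_covers; pose G_in j := G j && (1 <= j <= n).
have G_in_covers : covers G_in.
  move=> i i_start; have [j Gj ij] := G_covers i i_start.
  by exists j; rewrite // /G_in Gj (window_in_range i_start ij).
suff : forall k (H : pred nat), count H (iota 1 n) <= k -> (forall j, H j -> G_in j) -> covers H ->
    exists2 H' : pred nat, (forall j, H' j -> G_in j) & minimal_cover H'.
  move=> /(_ _ G_in (leqnn _) (fun _ => id) G_in_covers)[H sub_H min_H].
  by exists H => // j /sub_H /andP.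
elim=> [|k IHk] H H_count sub_H H_covers.
  have [|j Hj ij] := H_covers 1; first by rewrite /window_start; lia.
  have /andP[_ j_range] := sub_H j Hj.
  suff : 0 < count H (iota 1 n) by lia.
  by rewrite -has_count; apply/hasP; exists j; rewrite // mem_iota; lia.
have [[x Hx x_redundant]|irredundant] :=
  classic (exists2 x, H x & covers (fun j => H j && (j != x))); last first.
  by exists H => //; split=> // x Hx x_redundant; apply: irredundant; exists x.
apply: (IHk _ _ _ x_redundant) => [|j /andP[/sub_H]//].
have x_in : x \in iota 1 n by have /andP[_] := sub_H x Hx; rewrite mem_iota; lia.
have : count H (iota 1 n) = count (fun j => H j && (j != x)) (iota 1 n) + (x \in iota 1 n).
  rewrite -count_uniq_mem ?iota_uniq // -count_predUI.
  rewrite [count (predI _ _) _](eq_count (a2 := pred0)) ?count_pred0 ?addn0.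
    by apply: eq_count => j /=; case: eqVneq => [->|]; rewrite ?Hx ?andbT ?orbF.
  by move=> j /=; case: eqVneq; rewrite ?andbF.
by rewrite x_in; lia.
Qed.

(* [in_C] with 0-based indices [nth 0 F k] in place of [i_(k+1)]. *)
Definition in_C_nth (F : seq nat) : Prop :=
  let f k := nth 0 F k in
  [/\ sorted ltn F, (forall k, k \in F -> 1 <= k <= n), 0 < size F,
      1 <= f 0 <= t & (1 < size F -> t < f 1)] /\
  [/\ (forall k, k.+1 < size F -> f k.+1 - f k <= t),
      (forall k, k.+2 < size F -> t < f k.+2 - f k),
      (1 < size F -> f (size F).-2 < n - t + 1) &
      n - t + 1 <= f (size F).-1 <= n].

Lemma in_CE F : in_C n t F <-> in_C_nth F.
Proof.
rewrite /in_C /in_C_nth /=; split.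
  move=> [[F_sorted F_range F_size] [F1 [F2 [F_gap [F_gap2 [F_pen F_last]]]]]].
  split; split=> // k k_lt.
    by have /F_gap/andP[] : 1 <= k.+1 <= size F - 1 by lia.
  by apply: (F_gap2 k.+1); lia.
move=> [[F_sorted F_range F_size F1 F2] [F_gap F_gap2 F_pen F_last]].
do 6?split=> //.
  move=> [|k] k_range //=; have k1_lt : k.+1 < size F by lia.
  have := ltn_nth_sorted F_sorted (ltnW k1_lt) k1_lt; rewrite ltnSn.
  by have := F_gap k k1_lt; lia.
by move=> [|k] k_range //=; apply: F_gap2; lia.
Qed.

Section CoverWithPrivateWindows.
Variable F : seq nat.
Local Notation f k := (nth 0 F k).
Hypotheses (F_sorted : sorted ltn F) (F_range : forall k, k \in F -> 1 <= k <= n).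
Hypotheses (F_covers : covers (mem F))
  (F_private : forall x, x \in F -> has_private_window (mem F) x).

Let ltn_f k l : k < size F -> l < size F -> (f k < f l) = (k < l).
Proof. exact: ltn_nth_sorted. Qed.

Let range_f k : k < size F -> 1 <= f k <= n.
Proof. by move=> k_lt; apply/F_range/mem_nth. Qed.

Let hit_window i : window_start i -> exists2 k, k < size F & in_window i (f k).
Proof.
by move=> /F_covers[x /(nthP 0)[k k_lt <-]]; exists k.
Qed.

Let private_window_nth k : k < size F ->
  exists2 i, window_start i &
    in_window i (f k) /\ forall l, l < size F -> in_window i (f l) -> l = k.
Proof.
move=> k_lt; have [i i_start [ik i_priv]] := F_private (mem_nth 0 k_lt).
exists i => //; split=> // l l_lt il; have := i_priv _ (mem_nth 0 l_lt) il.
by apply: contra_eq => lk; rewrite neq_ltn !ltn_f // -neq_ltn.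
Qed.

Let size_gt0 : 0 < size F.
Proof. by have [|k k_lt _] := @hit_window 1; rewrite /window_start; lia. Qed.

Let first_le : 1 <= f 0 <= t.
Proof.
have [|k k_lt /andP[_ k_le]] := @hit_window 1; first by rewrite /window_start; lia.
have := leq_nth_sorted F_sorted size_gt0 k_lt; rewrite leq0n.
by have := range_f size_gt0; lia.
Qed.

Let second_gt : 1 < size F -> t < f 1.
Proof.
move=> size_gt1; rewrite ltnNge; apply/negP => f1_le.
have [i i_start [i0 i_priv]] := private_window_nth size_gt0.
have := i_priv 1 size_gt1; have := ltn_f size_gt0 size_gt1.
by move: i_start i0 f1_le; rewrite /window_start /in_window; lia.
Qed.

Let gap_le k : k.+1 < size F -> f k.+1 - f k <= t.
Proof.
move=> k1_lt; rewrite leqNgt; apply/negP => gap.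
have [|l l_lt kl] := @hit_window (f k).+1.
  by have := range_f k1_lt; rewrite /window_start; lia.
have := ltn_f (ltnW k1_lt) l_lt; have := ltn_f l_lt k1_lt.
by move: kl; rewrite /in_window; lia.
Qed.

Let gap2_gt k : k.+2 < size F -> t < f k.+2 - f k.
Proof.
move=> k2_lt; rewrite ltnNge; apply/negP => gap.
have k1_lt : k.+1 < size F by lia.
have [i i_start [ik1 i_priv]] := private_window_nth k1_lt.
have := i_priv k (ltnW k1_lt); have := i_priv k.+2 k2_lt.
have := ltn_f (ltnW k1_lt) k1_lt; have := ltn_f k1_lt k2_lt.
by move: ik1; rewrite /in_window; lia.
Qed.

Let penultimate_lt : 1 < size F -> f (size F).-2 < n - t + 1.
Proof.
move=> size_gt1; rewrite ltnNge; apply/negP => pen.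
have last_lt : (size F).-1 < size F by lia.
have pen_lt : (size F).-2 < size F by lia.
have [i i_start [i_last i_priv]] := private_window_nth last_lt.
have := i_priv _ pen_lt; have := ltn_f pen_lt last_lt.
by move: i_start i_last; rewrite /window_start /in_window; lia.
Qed.

Let last_range : n - t + 1 <= f (size F).-1 <= n.
Proof.
have last_lt : (size F).-1 < size F by lia.
have [|l l_lt l_in] := @hit_window (n - t + 1); first by rewrite /window_start; lia.
have := ltn_f last_lt l_lt; have := range_f last_lt.
by move: l_in; rewrite /in_window; lia.
Qed.

Lemma in_C_nth_of_private_cover : in_C_nth F.
Proof.
exact: conj (And5 F_sorted F_range size_gt0 first_le second_gt)
  (And4 gap_le gap2_gt penultimate_lt last_range).
Qed.

End CoverWithPrivateWindows.

Section InC.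
Variable F : seq nat.
Local Notation f k := (nth 0 F k).
Hypothesis F_C : in_C_nth F.

Lemma in_C_nth_covers : covers (mem F).
Proof.
move: F_C => [[F_sorted F_range F_size F1 F2] [F_gap F_gap2 F_pen F_last]] i i_start.
have [i_le|f0_lt] := leqP i (f 0).
  by exists (f 0); [exact: mem_nth | move: i_start F1 i_le; rewrite /window_start /in_window; lia].
have ex_below : exists k, (k < size F) && (f k < i) by exists 0; rewrite F_size.
have below_bounded k : (k < size F) && (f k < i) -> k <= size F by case/andP=> /ltnW.
case: (ex_maxnP ex_below below_bounded) => k /andP[k_lt fk_lt] k_max.
have [k1_lt|k1_ge] := ltnP k.+1 (size F); last first.
  have k_last : k = (size F).-1 by lia.
  by move: F_last i_start fk_lt; rewrite /window_start k_last; lia.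
exists (f k.+1); first exact: mem_nth.
have : ~~ ((k.+1 < size F) && (f k.+1 < i)) by apply/negP => /k_max; lia.
by rewrite k1_lt /= -leqNgt; have := F_gap k k1_lt; move: fk_lt; rewrite /in_window; lia.
Qed.

Lemma in_C_nth_private k : k < size F ->
  exists2 i, window_start i &
    in_window i (f k) /\ forall l, l < size F -> in_window i (f l) -> l = k.
Proof.
move: F_C => [[F_sorted F_range F_size F1 F2] [F_gap F_gap2 F_pen F_last]].
have ltn_f := ltn_nth_sorted F_sorted; case: k => [|k] k_lt.
  exists 1; first by rewrite /window_start; lia.
  split=> [|[//|l] l_lt]; first by move: F1; rewrite /in_window; lia.
  have size_gt1 : 1 < size F by lia.
  have := F2 size_gt1; have := leq_nth_sorted F_sorted size_gt1 l_lt.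
  by rewrite /in_window; lia.
have size_gt1 : 1 < size F by lia.
exists (f k).+1.
  have := leq_nth_sorted F_sorted (k := k) (l := (size F).-2).
  by have := F_pen size_gt1; rewrite /window_start; lia.
split=> [|l l_lt]; first by have := F_gap k k_lt; have := ltn_f k k.+1; rewrite /in_window; lia.
have [lk|kl] := ltnP l k.+1.
  by have := ltn_f k l; have := ltn_f l k; rewrite /in_window; lia.
have [//|l_ne] := eqVneq l k.+1.
by have := F_gap2 k; have := ltn_f l k.+2; have := ltn_f k.+2 l; rewrite /in_window; lia.
Qed.

Lemma in_C_nth_private_window x : x \in F -> has_private_window (mem F) x.
Proof.
case/(nthP 0) => k k_lt <-; have [i i_start [ik i_priv]] := in_C_nth_private k_lt.
by exists i => //; split=> // y /(nthP 0)[l l_lt <-] /(i_priv l l_lt) ->.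
Qed.

End InC.

Lemma in_C_incl_eq F G : in_C n t F -> in_C n t G -> {subset G <= F} -> G = F.
Proof.
move=> /in_CE F_C /in_CE G_C sub_GF; have [[F_sorted _ _ _ _] _] := F_C.
have [[G_sorted _ _ _ _] _] := G_C.
apply: (irr_sorted_eq ltn_trans ltnn) => // x; apply/idP/idP => [/sub_GF//|xF].
have [i i_start [ix i_priv]] := in_C_nth_private_window F_C xF.
have [y yG iy] := in_C_nth_covers G_C i_start.
by rewrite -(i_priv y (sub_GF y yG) iy).
Qed.

Lemma minimal_cover_in_C (H : pred nat) : (forall j, H j -> 1 <= j <= n) ->
  minimal_cover H -> in_C n t (filter H (iota 1 n)).
Proof.
move=> H_range H_min; have F_sorted := sorted_filter ltn_trans H (iota_ltn_sorted 1 n).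
set F := filter H (iota 1 n) in F_sorted *.
have memF j : (j \in F) = H j.
  by rewrite mem_filter mem_iota; case Hj: (H j); rewrite //= (H_range j Hj); lia.
apply/in_CE; apply: in_C_nth_of_private_cover.
- exact: F_sorted.
- by move=> j; rewrite memF; apply: H_range.
- case: H_min => H_covers _ i /H_covers[j Hj ij].
  by exists j; rewrite // -memF in Hj.
move=> x; rewrite memF => Hx; have [i i_start [ix i_priv]] := minimal_cover_private H_min Hx.
by exists i => //; split=> // y yF; apply: i_priv; rewrite -memF.
Qed.

Lemma packs_iff_in_C s a :
  packs s a <-> forall F, in_C n t F -> s <= weight (mem F) a.
Proof.
split=> [a_packs F /in_CE/in_C_nth_covers|a_weight]; first exact: packs_weight.
apply: packs_of_weight => G /minimal_cover_exists[H sub_H H_min].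
have F_C := minimal_cover_in_C (fun j Hj => (sub_H j Hj).2) H_min.
apply: leq_trans (a_weight _ F_C) _; apply: leq_weight => j _.
rewrite /= mem_filter; case Hj: (H j) => //=; rewrite (sub_H j Hj).1; lia.
Qed.

End Windows.

(** * Monomial ideals *)

Section MonomialIdeals.
Variables (K : fieldType) (n : nat).
Local Notation S := {mpoly K[n]}.
Local Notation mon := 'X_{1..n}.
Local Open Scope ring_scope.

Lemma ideal_gen_ind (G P : S -> Prop) : P 0 -> (forall a b, P a -> P b -> P (a + b)) ->
  (forall a b, P b -> P (a * b)) -> (forall g, G g -> P g) ->
  forall f, ideal_gen G f -> P f.
Proof.
move=> P0 PD PM PG f [l [l_gen ->]]; elim: l l_gen => [|p l IHl] l_gen.
  by rewrite big_nil.
rewrite big_cons; apply: PD; first by apply/PM/PG/l_gen; rewrite inE eqxx.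
by apply: IHl => q q_l; apply: l_gen; rewrite inE q_l orbT.
Qed.

Lemma ideal_gen0 (G : S -> Prop) : ideal_gen G 0.
Proof. by exists [::]; rewrite big_nil. Qed.

Lemma ideal_genD (G : S -> Prop) f g :
  ideal_gen G f -> ideal_gen G g -> ideal_gen G (f + g).
Proof.
move=> [l1 [l1_gen ->]] [l2 [l2_gen ->]]; exists (l1 ++ l2); rewrite big_cat.
by split=> // p; rewrite mem_cat => /orP[/l1_gen|/l2_gen].
Qed.

Lemma ideal_genMl (G : S -> Prop) h f : ideal_gen G f -> ideal_gen G (h * f).
Proof.
move=> [l [l_gen ->]]; exists [seq (h * p.1, p.2) | p <- l]; split.
  by move=> p /mapP[q q_l ->] /=; apply: l_gen.
by rewrite big_map mulr_sumr; apply: eq_bigr => p _; rewrite mulrA.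
Qed.

Lemma ideal_gen_mem (G : S -> Prop) g : G g -> ideal_gen G g.
Proof.
move=> Gg; exists [:: (1, g)]; rewrite big_seq1 mul1r; split=> // p.
by rewrite inE => /eqP ->.
Qed.

Lemma is_prime_ideal_ext (P Q : S -> Prop) :
  (forall g, P g <-> Q g) -> is_prime_ideal Q -> is_prime_ideal P.
Proof.
move=> PQ [Q0 QD QM Q1 Q_prime]; split=> [|a b|a b||a b].
- exact/PQ.
- by move=> /PQ Qa /PQ Qb; apply/PQ/QD.
- by move=> /PQ Qb; apply/PQ/QM.
- by move=> /PQ.
by move=> /PQ/Q_prime[] ?; [left | right]; apply/PQ.
Qed.

Definition supported (D : mon -> Prop) (f : S) : Prop := forall m, m \in msupp f -> D m.

Lemma supported_X (D : mon -> Prop) m : D m -> supported D 'X_[m].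
Proof. by move=> Dm m'; rewrite msuppX inE => /eqP ->. Qed.

Lemma ideal_gen_supported (G : S -> Prop) (D : mon -> Prop) :
  (forall m1 m2, D m2 -> D (m1 + m2)%MM) -> (forall g, G g -> supported D g) ->
  forall f, ideal_gen G f -> supported D f.
Proof.
move=> D_up G_supp; apply: ideal_gen_ind => [m|a b a_supp b_supp m|a b b_supp m|//].
- by rewrite msupp0.
- by move=> /msuppD_le; rewrite mem_cat => /orP[/a_supp|/b_supp].
by move=> /msuppM_le/allpairsP[[m1 m2] /= [_ m2_b ->]]; apply/D_up/b_supp.
Qed.

Lemma supported_ideal_gen (G : S -> Prop) (D : mon -> Prop) :
  (forall m, D m -> ideal_gen G 'X_[m]) ->
  forall f, supported D f -> ideal_gen G f.
Proof.
move=> D_gen f; rewrite /supported [X in ideal_gen _ X]mpolyE.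
elim: (msupp f) => [|m l IHl] f_supp; first by rewrite big_nil; apply: ideal_gen0.
rewrite big_cons; apply: ideal_genD.
  by rewrite -mul_mpolyC; apply/ideal_genMl/D_gen/f_supp; rewrite inE eqxx.
by apply: IHl => m' m'_l; apply: f_supp; rewrite inE m'_l orbT.
Qed.

End MonomialIdeals.

Lemma exists_ordS (n i : nat) : (1 <= i <= n)%N -> exists k : 'I_n, i = k.+1.
Proof.
move=> i_range; have i_lt : (i.-1 < n)%N by lia.
by exists (Ordinal i_lt); rewrite /=; lia.
Qed.

(** * Powers of the path ideal *)

Section PathIdeal.
Variables (K : fieldType) (n t : nat).
Local Notation S := {mpoly K[n]}.
Local Notation mon := 'X_{1..n}.

Lemma xvarS (k : 'I_n) : @xvar K n k.+1 = 'X_k.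
Proof.
by rewrite /xvar /= insubT // => k_lt; congr 'X_(_); apply: val_inj.
Qed.

Lemma prod_xvar a b : (1 <= a <= b)%N -> (b <= n.+1)%N ->
  (\prod_(a <= j < b) @xvar K n j)%R = 'X_[[multinom (a <= k.+1 < b : nat) | k < n]].
Proof.
move=> /andP[a_ge1]; elim: b => [|b IHb] a_le b_le; first by lia.
have [a_eq|a_lt] := eqVneq a b.+1.
  rewrite a_eq big_geq // -mpolyX0; congr 'X_[_]; apply/mnmP => k.
  by rewrite mnmE mnm0E; have /negbTE -> : ~~ (b.+1 <= k.+1 < b.+1)%N by lia.
rewrite big_nat_recr /= ?IHb; try lia.
have [k b_eq] : exists k : 'I_n, b = k.+1 by apply: exists_ordS; lia.
rewrite b_eq xvarS -mpolyXD; congr 'X_[_]; apply/mnmP => k'; rewrite mnmDE !mnmE.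
have [<-|k_ne] := eqVneq k k'.
  by rewrite ltnn andbF; have -> : (a <= k.+1 < k.+2)%N by lia.
by rewrite addn0 [(_ < k.+2)%N]ltnS [(k'.+1 <= _)%N]leq_eqVlt eqSS val_eqE eq_sym (negbTE k_ne).
Qed.

Local Open Scope nat_scope.

(* 1-based like [xvar], and [0] outside [1..n]. *)
Definition exponent (m : mon) (j : nat) : nat := \sum_(k < n | k.+1 == j) m k.

Lemma exponentS m (k : 'I_n) : exponent m k.+1 = m k.
Proof. by rewrite /exponent (big_pred1 k) // => k'; rewrite eqSS. Qed.

Lemma exponent_out m j : ~~ (1 <= j <= n) -> exponent m j = 0.
Proof.
move=> j_out; rewrite /exponent big_pred0 // => k; apply: contraNF j_out => /eqP <-.
by have := ltn_ord k; lia.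
Qed.

Lemma exponentD m1 m2 j : exponent (m1 + m2)%MM j = exponent m1 j + exponent m2 j.
Proof. by rewrite /exponent -big_split; apply: eq_bigr => k _; rewrite mnmDE. Qed.

Lemma exponentB m1 m2 j : exponent (m1 - m2)%MM j = exponent m1 j - exponent m2 j.
Proof.
have [/exists_ordS[k ->]|j_out] := boolP (1 <= j <= n); first by rewrite !exponentS mnmBE.
by rewrite !exponent_out.
Qed.

Definition window_mon (i : nat) : mon := [multinom in_window t i k.+1 : nat | k < n].

Hypothesis t_le_n : t <= n.

Lemma exponent_window_mon i j : window_start n t i -> exponent (window_mon i) j = in_window t i j.
Proof.
move=> i_start; have [/exists_ordS[k ->]|j_out] := boolP (1 <= j <= n).
  by rewrite exponentS mnmE.
rewrite exponent_out //; case: (boolP (in_window t i j)) => // ij.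
by case/negP: j_out; apply: window_in_range ij.
Qed.

Lemma path_genE i : window_start n t i -> @path_gen K n t i = 'X_[window_mon i].
Proof. by rewrite /window_start => i_start; rewrite /path_gen prod_xvar //; lia. Qed.

Local Notation pow s := (ideal_pow (@path_ideal K n t) s).

Lemma packs_exponentD s m1 m2 : packs n t s (exponent m2) -> packs n t s (exponent (m1 + m2)%MM).
Proof. by apply: packs_mono => j; rewrite exponentD leq_addl. Qed.

Lemma path_ideal_supported (f : S) :
  path_ideal t f -> supported (fun m => packs n t 1 (exponent m)) f.
Proof.
apply: ideal_gen_supported => [m1 m2|g [i [i_start ->]]]; first exact: packs_exponentD.
rewrite path_genE //; apply: supported_X.
by apply: packs_mono (packs_window i_start) => j; rewrite exponent_window_mon.
Qed.

Lemma ideal_pow_supported s (f : S) : pow s f -> supported (fun m => packs n t s (exponent m)) f.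
Proof.
elim: s f => [|s IHs] f; first by move=> _ m _; apply: packs0.
apply: ideal_gen_supported => [m1 m2|_ [a [b [a_I [b_pow ->]]]] m]; first exact: packs_exponentD.
move=> /msuppM_le/allpairsP[[m1 m2] /= [m1_a m2_b ->]].
apply: packs_mono (packs_add (path_ideal_supported a_I m1_a) (IHs b b_pow m2 m2_b)) => j.
by rewrite exponentD.
Qed.

Lemma ideal_pow_X s m : packs n t s (exponent m) -> pow s 'X_[m].
Proof.
elim: s m => [//|s IHs] m [l l_size [l_start l_dom]].
case: l l_size l_start l_dom => [//|i l] [l_size] /andP[i_start l_start] l_dom.
have w_le : (window_mon i <= m)%MM.
  by apply/mnm_lepP => k; rewrite mnmE -exponentS; have := l_dom k.+1; rewrite /=; lia.
rewrite -(submK w_le) mpolyXD mulrC; apply: ideal_gen_mem.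
exists 'X_[window_mon i], 'X_[m - window_mon i]; split.
  by apply: ideal_gen_mem; exists i; rewrite path_genE.
split=> //; apply: IHs; exists l => //; split=> // j.
by rewrite exponentB exponent_window_mon //; have := l_dom j; rewrite /=; lia.
Qed.

Lemma ideal_pow_pathE s (f : S) : pow s f <-> supported (fun m => packs n t s (exponent m)) f.
Proof.
split=> [|f_supp]; first exact: ideal_pow_supported.
by case: s f_supp => // s; apply: supported_ideal_gen => m; apply: ideal_pow_X.
Qed.

End PathIdeal.

(** * The [F]-degree *)

Lemma coefM_low (R : nzRingType) (q p : {poly R}) k :
  (forall j, (j < k)%N -> p`_j = 0)%R -> ((q * p)`_k = q`_0 * p`_k)%R.
Proof.
move=> p_low; rewrite coefM big_ord_recl subn0 big1 ?addr0 // => j _.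
by rewrite p_low ?mulr0 // lift0; have := ltn_ord j; lia.
Qed.

Section FDegree.
Variables (K : fieldType) (n : nat).
Local Notation S := {mpoly K[n]}.
Local Notation mon := 'X_{1..n}.

Definition degF (F : seq nat) (m : mon) : nat := \sum_(k < n | k.+1 \in F) m k.

(* Membership of [f] in [p_F ^ s]. *)
Definition degF_ge (F : seq nat) (s : nat) (f : S) : bool :=
  all (fun m => s <= degF F m)%N (msupp f).

Lemma degFD F (m1 m2 : mon) : degF F (m1 + m2)%MM = (degF F m1 + degF F m2)%N.
Proof. by rewrite /degF -big_split; apply: eq_bigr => k _; rewrite mnmDE. Qed.

Lemma degF0 F : degF F 0%MM = 0%N.
Proof. by rewrite /degF big1 // => k _; rewrite mnm0E. Qed.

Lemma leq_degF F (m : mon) (k : 'I_n) : k.+1 \in F -> (m k <= degF F m)%N.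
Proof. by move=> kF; rewrite /degF (bigD1 k) //= leq_addr. Qed.

Lemma degF_U F (k : 'I_n) : k.+1 \in F -> degF F U_(k)%MM = 1%N.
Proof.
move=> kF; rewrite /degF (bigD1 k) //= mnm1E eqxx big1 // => k' /andP[_ k'_ne].
by rewrite mnm1E eq_sym (negbTE k'_ne).
Qed.

Lemma weight_exponent F (m : mon) : weight n (mem F) (exponent m) = degF F m.
Proof.
rewrite /weight big_add1 /= big_mkord /degF [RHS]big_mkcond /=; apply: eq_bigr => k _.
by rewrite exponentS; case: (_ \in _); rewrite ?mul1n ?mul0n.
Qed.

Lemma degF_geD F s (f g : S) : degF_ge F s f -> degF_ge F s g -> degF_ge F s (f + g).
Proof.
move=> /allP f_ge /allP g_ge; apply/allP => m /msuppD_le.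
by rewrite mem_cat => /orP[/f_ge|/g_ge].
Qed.

Lemma degF_geMl F s (a f : S) : degF_ge F s f -> degF_ge F s (a * f).
Proof.
move=> /allP f_ge; apply/allP => m /msuppM_le/allpairsP[[m1 m2] /= [_ m2_f ->]].
by rewrite degFD; have := f_ge m2 m2_f; rewrite /=; lia.
Qed.

Lemma degF_ge_X F s (m : mon) : degF_ge F s 'X_[m] = (s <= degF F m)%N.
Proof. by rewrite /degF_ge msuppX /= andbT. Qed.

Lemma degF_ge_MX F s (m : mon) (g : S) :
  degF_ge F s (g * 'X_[m]) = all (fun m' => s <= degF F m + degF F m')%N (msupp g).
Proof.
rewrite /degF_ge (perm_all _ (msuppMX g m)) all_map; apply: eq_all => m' /=.
by rewrite degFD.
Qed.

Lemma prime_ofE F (g : S) : (forall k, k \in F -> 1 <= k <= n)%N ->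
  prime_of F g <-> degF_ge F 1 g.
Proof.
move=> F_range; split.
  apply: (ideal_gen_ind (P := degF_ge F 1)) => [|a b|a b|_ [i [iF ->]]].
  - by rewrite /degF_ge msupp0.
  - exact: degF_geD.
  - exact: degF_geMl.
  have [k i_eq] := exists_ordS (F_range i iF).
  by rewrite i_eq xvarS degF_ge_X degF_U -?i_eq.
move=> /allP g_ge; apply: (supported_ideal_gen (D := fun m => 0 < degF F m)%N) g_ge => m.
rewrite /degF lt0n sum_nat_eq0 negb_forall => /existsP[k]; rewrite negb_imply -lt0n.
move=> /andP[kF mk_pos]; have U_le : (U_(k) <= m)%MM by rewrite lep1mP -lt0n.
rewrite -(submK U_le) mpolyXD; apply/ideal_genMl/ideal_gen_mem.
by exists k.+1; rewrite xvarS.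
Qed.

Local Open Scope ring_scope.

(* [Fgrade F] substitutes [x_k T^[k+1 \in F]] for [x_k], so the coefficient of
   [T^d] in [Fgrade F f] collects the terms of [f] of [F]-degree [d]. *)
Definition Fgrade (F : seq nat) : S -> {poly S} :=
  mmap (polyC \o @mpolyC n K) (fun k => ('X_k)%:P * 'X ^+ (k.+1 \in F)).

Lemma FgradeM F : {morph Fgrade F : x y / x * y}.
Proof. by move=> x y; rewrite /Fgrade rmorphM. Qed.

Lemma Fgrade_X F m : Fgrade F 'X_[m] = 'X_[m]%:P * 'X^(degF F m).
Proof.
rewrite /Fgrade mmapX /mmap1; under eq_bigr do rewrite exprMn -exprM.
rewrite big_split /= prodrXr; under eq_bigr do rewrite -rmorphXn.
rewrite -rmorph_prod /= -mpolyXE_id /degF [in RHS]big_mkcond /=; congr (_ * 'X^_).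
by apply: eq_bigr => k _; case: (_ \in _); rewrite ?mul1n ?mul0n.
Qed.

Lemma FgradeE F p :
  Fgrade F p = \sum_(m <- msupp p) (p@_m *: 'X_[m])%:P * 'X^(degF F m).
Proof.
rewrite {1}/Fgrade /mmap; apply: eq_bigr => m _.
rewrite -/(Fgrade F) (_ : mmap1 _ m = Fgrade F 'X_[m]); last by rewrite /Fgrade mmapX.
by rewrite Fgrade_X /= mulrA -rmorphM /= mul_mpolyC.
Qed.

Lemma coef_Fgrade_eq0 F p d :
  ((Fgrade F p)`_d == 0) = ~~ has (fun m => degF F m == d) (msupp p).
Proof.
rewrite FgradeE coef_sum; under eq_bigr do rewrite coefCM coefXn mulr_natr.
have [/hasP[m0 m0_p /eqP deg_m0]|no_m] := boolP (has _ _); last first.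
  rewrite big1_seq ?eqxx // => m /andP[_ m_p].
  have : degF F m != d by apply: contra no_m => deg_m; apply/hasP; exists m.
  by rewrite eq_sym => /negbTE ->.
apply/negbTE/eqP => /(congr1 (mcoeff m0)); rewrite raddf_sum /= (bigD1_seq m0) ?msupp_uniq //=.
rewrite deg_m0 eqxx mulr1n mcoeffZ mcoeffX eqxx mulr1 big1_seq ?addr0 ?mcoeff0.
  by apply/eqP; rewrite -mcoeff_msupp.
move=> m /andP[m_ne _]; case: (d == degF F m); rewrite ?mulr1n ?mulr0n ?mcoeff0 //.
by rewrite mcoeffZ mcoeffX (negbTE m_ne) mulr0.
Qed.

Lemma degF_ge_primary F s (g f : S) :
  ~~ degF_ge F 1 g -> ~~ degF_ge F s f -> ~~ degF_ge F s (g * f).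
Proof.
rewrite /degF_ge -!has_predC => /hasP[m0 m0_g /= deg_m0] /hasP[m1 m1_f /= deg_m1].
have g0 : (Fgrade F g)`_0 != 0.
  by rewrite coef_Fgrade_eq0 negbK; apply/hasP; exists m0 => //; rewrite -leqn0 leqNgt.
have f_m1 : (Fgrade F f)`_(degF F m1) != 0.
  by rewrite coef_Fgrade_eq0 negbK; apply/hasP; exists m1.
have ex_f : exists d, (Fgrade F f)`_d != 0 by exists (degF F m1).
case: (ex_minnP ex_f) => d0 fd0 d0_min.
have d0_lt : (d0 < s)%N by apply: leq_ltn_trans (d0_min _ f_m1) _; rewrite ltnNge.
have : (Fgrade F (g * f))`_d0 != 0.
  rewrite FgradeM coefM_low ?mulf_neq0 // => j j_lt.
  by apply/eqP; apply: contraTT j_lt => /d0_min; rewrite -leqNgt.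
rewrite coef_Fgrade_eq0 negbK => /hasP[m m_gf /eqP deg_m]; apply/hasP; exists m => //=.
by rewrite deg_m -ltnNge.
Qed.

End FDegree.

(** * Associated primes *)

Lemma prime_avoid_monomial (K : fieldType) (n : nat) (P : {mpoly K[n]} -> Prop) s :
  is_prime_ideal P ->
  exists my : 'X_{1..n}, ~ P 'X_[my] /\ forall k : 'I_n, ~ P 'X_k -> (s <= my k)%N.
Proof.
move=> [_ _ _ P1 P_prime].
have P_pow x k : P (x ^+ k)%R -> P x.
  by elim: k => [|k IHk]; rewrite ?expr0 // exprS => /P_prime[|/IHk].
suff /(_ (enum 'I_n))[my [my_P my_ge]] : forall l : seq 'I_n, exists my : 'X_{1..n},
    ~ P 'X_[my] /\ forall k, k \in l -> ~ P 'X_k -> (s <= my k)%N.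
  by exists my; split=> // k; apply: my_ge; rewrite mem_enum.
elim=> [|k l [my [my_P my_ge]]]; first by exists 0%MM; rewrite mpolyX0.
have [Pk|nPk] := classic (P 'X_k).
  by exists my; split=> // k'; rewrite inE => /orP[/eqP->|/my_ge].
exists (my + U_(k) *+ s)%MM; split.
  by rewrite mpolyXD -mpolyXn => /P_prime[|/P_pow].
move=> k' k'_in nPk'; rewrite mnmDE mulmnE mnmE.
have [<-|k_ne] := eqVneq k k'; first by rewrite mul1n leq_addl.
by move: k'_in; rewrite inE eq_sym (negbTE k_ne) /= => /my_ge/(_ nPk'); lia.
Qed.

Section Associated.
Variables (K : fieldType) (n t : nat).
Local Notation S := {mpoly K[n]}.
Local Notation mon := 'X_{1..n}.
Local Notation pow s := (ideal_pow (@path_ideal K n t) s).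
Hypothesis t_le_n : (t <= n)%N.

Lemma ideal_pow_path_in_C s (f : S) :
  pow s f <-> forall F, in_C n t F -> degF_ge F s f.
Proof.
rewrite ideal_pow_pathE //; split=> [f_supp F F_C|f_ge m m_f].
  by apply/allP => m /f_supp/(packs_iff_in_C t_le_n)/(_ F F_C); rewrite weight_exponent.
by apply/(packs_iff_in_C t_le_n) => F /f_ge/allP/(_ m m_f); rewrite weight_exponent.
Qed.

Lemma degF_ge_prime F : is_prime_ideal (fun g : S => degF_ge F 1 g).
Proof.
split=> [|a b|a b|/=|a b].
- by rewrite /degF_ge msupp0.
- exact: degF_geD.
- exact: degF_geMl.
- by rewrite -mpolyX0 degF_ge_X degF0.
move=> ab_ge; case a_ge: (degF_ge F 1 a); [by left | right].
by apply: contraTT ab_ge; apply: degF_ge_primary; rewrite a_ge.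
Qed.

Lemma is_ass_path_pow_in_C s (P : S -> Prop) : is_ass (pow s) P ->
  exists2 F, in_C n t F & forall g, P g <-> prime_of F g.
Proof.
move=> [P_prime [f P_colon]]; have [my [my_P my_ge]] := prime_avoid_monomial s P_prime.
have [F [F_C f_lt F_P]] : exists F,
    [/\ in_C n t F, ~~ degF_ge F s f & forall i, i \in F -> P (@xvar K n i)].
  apply: NNPP => no_F; apply/my_P/P_colon/ideal_pow_path_in_C => G G_C.
  have [f_ge|f_lt] := boolP (degF_ge G s f); first exact: degF_geMl.
  have [i [iG nPi]] : exists i, i \in G /\ ~ P (@xvar K n i).
    apply: NNPP => all_P; apply: no_F; exists G; split=> // i iG.
    by apply: NNPP => nPi; apply: all_P; exists i.
  have [[_ G_range _] _] := G_C; have [k i_eq] := exists_ordS (G_range i iG).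
  rewrite i_eq xvarS in nPi; rewrite mulrC; apply: degF_geMl; rewrite degF_ge_X.
  by apply: leq_trans (my_ge k nPi) (leq_degF _ _); rewrite -i_eq.
have [[_ F_range _] _] := F_C; exists F => // g; split=> [Pg|]; last first.
  case: P_prime => P0 PD PM _ _.
  by apply: (ideal_gen_ind (P := P)) => // _ [i [iF ->]]; apply: F_P.
apply/(prime_ofE _ F_range); apply: contraT => g_lt.
have /ideal_pow_path_in_C/(_ F F_C) := (P_colon g).1 Pg.
by rewrite (negbTE (degF_ge_primary g_lt f_lt)).
Qed.

Lemma colon_monomial_in_C s F : (0 < s)%N -> in_C n t F ->
  exists m0 : mon, forall g : S, pow s (g * 'X_[m0]) <-> degF_ge F 1 g.
Proof.
move=> s_gt0 F_C; have [[_ F_range F_size] _] := F_C.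
have F0 : nth 0 F 0 \in F by apply: mem_nth.
have [k0 F0_eq] := exists_ordS (F_range _ F0).
pose m0 : mon := [multinom if k.+1 \in F then (if k == k0 then s.-1 else 0) else s | k < n].
have deg_m0 : degF F m0 = s.-1.
  rewrite /degF (bigD1 k0) -?F0_eq //= mnmE -F0_eq F0 eqxx big1 ?addn0 // => k.
  by case/andP=> kF /negbTE k_ne; rewrite mnmE kF k_ne.
have deg_other G : in_C n t G -> G != F -> (s <= degF G m0)%N.
  move=> G_C G_ne; have [[_ G_range _] _] := G_C.
  have : ~~ all (mem F) G.
    by apply: contra G_ne => /allP G_sub; apply/eqP/(in_C_incl_eq t_le_n F_C G_C) => x /G_sub.
  rewrite -has_predC => /hasP[j jG /= jF]; have [k j_eq] := exists_ordS (G_range j jG).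
  by apply: leq_trans (leq_degF m0 (k := k) _); rewrite ?mnmE -j_eq // (negbTE jF).
exists m0 => g; rewrite ideal_pow_path_in_C; split=> [/(_ F F_C)|/allP g_ge G G_C].
  by rewrite degF_ge_MX deg_m0 => /allP g_ge; apply/allP => m /g_ge /=; lia.
rewrite degF_ge_MX; apply/allP => m m_g /=; have [->|G_ne] := eqVneq G F.
  by rewrite deg_m0; have := g_ge m m_g; rewrite /=; lia.
by have := deg_other G G_C G_ne; lia.
Qed.

Lemma in_C_is_ass_path_pow s F (P : S -> Prop) : (0 < s)%N -> in_C n t F ->
  (forall g, P g <-> prime_of F g) -> is_ass (pow s) P.
Proof.
move=> s_gt0 F_C P_F; have [[_ F_range _] _] := F_C.
have P_deg g : P g <-> degF_ge F 1 g by rewrite P_F prime_ofE.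
have [m0 colon_m0] := colon_monomial_in_C s_gt0 F_C.
split; last by exists 'X_[m0] => g; rewrite P_deg colon_m0.
exact: is_prime_ideal_ext P_deg (degF_ge_prime F).
Qed.

End Associated.

Theorem corollary2p8 (K : fieldType) (n t : nat) :
  (2 <= t <= n)%N ->
  forall s : nat, (1 <= s)%N ->
  forall P : {mpoly K[n]} -> Prop,
    is_ass (ideal_pow (@path_ideal K n t) s) P <->
    exists F : seq nat, in_C n t F /\ (forall g, P g <-> @prime_of K n F g).
Proof.
move=> /andP[_ t_le_n] s s_gt0 P; split.
  by case/(is_ass_path_pow_in_C t_le_n) => F F_C P_F; exists F.
by case=> F [F_C P_F]; apply: in_C_is_ass_path_pow P_F.
Qed.
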